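(* Let $K=3m$ with $m\ge 3$ and suppose $t=KM/N=K-3$. Then the D2D coded caching rate $R=N/M-1$ is achievable with subpacketization $$F=\frac{2K(K-3)(K-3/2)}{3}=9m(m-1)(2m-1).$$
   Context: D2D coded caching setting: there are $N\ge 1$ files $W_1,\dots,W_N$ and $K\ge 2$ users, each with a cache of size $M$ files, $0<M\le N$, and $t:=KM/N$ is assumed to be a positive integer. A D2D coded caching scheme with (uncoded placement and) subpacketization $F\in\mathbb{N}_+$ is defined as follows. Fix a packet size $b\ge 1$; each file is a sequence of $F$ packets $W_n=(W_n^{(1)},\dots,W_n^{(F)})$, $W_n^{(j)}\in\{0,1\}^b$. Placement: each user $k\in[K]$ stores the packets $\{W_n^{(j)}:(n,j)\in Z_k\}$ for a fixed index set $Z_k\subseteq[N]\times[F]$ with $|Z_k|\le MF$ (independent of demands and file contents). Delivery: for every demand vector $\mathbf d=(d_1,\dots,d_K)\in[N]^K$, each user $k$ broadcasts to all other users $\ell_k(\mathbf d)\in\mathbb{N}$ blocks in $\{0,1\}^b$, each a deterministic function of the packets stored by user $k$; it is required that for all file contents each user $k$ can recover all $F$ packets of $W_{d_k}$ from its stored packets and the blocks sent by the other users. The rate is $R=\max_{\mathbf d}\frac{1}{F}\sum_{k=1}^K\ell_k(\mathbf d)$ (transmitted bits normalized by the file size $Fb$). The rate $R$ is achievable with subpacketization $F$ if such a scheme with rate $R$ exists for every packet size $b\ge 1$. *)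

From mathcomp Require Import all_boot all_order all_algebra.
Set Implicit Arguments. Unset Strict Implicit. Unset Printing Implicit Defensive.
Import Order.TTheory GRing.Theory Num.Theory.

(* Packets are bit strings in {0,1}^b, modelled as b.-tuple bool.
   A file library is W : 'I_N -> 'I_F -> b.-tuple bool  (W n j = W_{n+1}^{(j+1)}). *)
Definition library (N F b : nat) := 'I_N -> 'I_F -> b.-tuple bool.

(* The content of a cache with index set Z: packets outside Z are hidden
   (replaced by the all-zero string), so any function of [restrict Z W]
   is a function of the stored packets only. *)
Definition restrict (N F b : nat) (Z : {set 'I_N * 'I_F}) (W : library N F b)
  : library N F b :=
  fun n j => if (n, j) \in Z then W n j else [tuple of nseq b false].

Local Open Scope ring_scope.

(* Demands are d : {ffun 'I_K -> 'I_N}.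
   - Z k : placement index set of user k, with |Z k| <= M F;
   - l d k : number of b-bit blocks broadcast by user k under demand d;
   - enc d k : the blocks sent by user k, computed from its cache content;
   - dec d k : user k's decoder, using its cache content and the blocks of
     the other users (its own slot is masked by [::]). *)
Definition D2D_scheme (N K F b : nat) (M R : rat) : Prop :=
  exists (Z : 'I_K -> {set 'I_N * 'I_F})
         (l : {ffun 'I_K -> 'I_N} -> 'I_K -> nat)
         (enc : {ffun 'I_K -> 'I_N} -> 'I_K -> library N F b -> seq (b.-tuple bool))
         (dec : {ffun 'I_K -> 'I_N} -> 'I_K -> library N F b ->
                ('I_K -> seq (b.-tuple bool)) -> 'I_F -> b.-tuple bool),
    [/\ (forall k, (#|Z k|%:R : rat) <= M * F%:R),
        (forall d k W, size (enc d k W) = l d k),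
        (forall d k (W : library N F b) j,
            dec d k (restrict (Z k) W)
                (fun i => if i == k then [::] else enc d i (restrict (Z i) W)) j
            = W (d k) j)
      & R = ((\max_(d : {ffun 'I_K -> 'I_N}) \sum_(k < K) l d k)%N%:R) / F%:R].

Definition achievable_with_subpack (N K : nat) (M R : rat) (F : nat) : Prop :=
  (0 < F)%N /\ forall b : nat, (1 <= b)%N -> D2D_scheme N K F b M R.

(* Split the K = 3m users into m groups of three and cut each file into
   labelled packets of two kinds: pair packets (z, v, s), with z and v in
   different groups, missing exactly at v and at the two group mates of z, and
   triple packets, missing at three users taken from three distinct groups.
   Every packet is missing at exactly three users, so each user caches the
   fraction t/K of every file, and there are 3K(K-3) + 108 C(m,3) = F labels.
   Each user broadcasts 2K - 3 XORs of packets in which every receiver knows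
   all summands but its own; every missing packet occurs in such a block, so
   all users decode, at rate K(2K - 3)/F = N/M - 1. *)

From HB Require Import structures.
From mathcomp Require Import all_boot all_order all_algebra zify ring lra.
From Stdlib Require Import ClassicalEpsilon.
Import Order.TTheory GRing.Theory Num.Theory.
Set Implicit Arguments. Unset Strict Implicit. Unset Printing Implicit Defensive.

Definition xor_tuple b (x y : b.-tuple bool) : b.-tuple bool :=
  [tuple addb (tnth x i) (tnth y i) | i < b].
Definition zero_tuple b : b.-tuple bool := [tuple false | _ < b].
Arguments zero_tuple {b}.

Lemma xor_tupleA b : associative (@xor_tuple b).
Proof. by move=> x y z; apply: eq_from_tnth => i; rewrite !tnth_mktuple addbA. Qed.

Lemma xor_tupleC b : commutative (@xor_tuple b).
Proof. by move=> x y; apply: eq_from_tnth => i; rewrite !tnth_mktuple addbC. Qed.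

Lemma xor0_tuple b : left_id (@zero_tuple b) (@xor_tuple b).
Proof. by move=> x; apply: eq_from_tnth => i; rewrite !tnth_mktuple. Qed.

HB.instance Definition _ b := Monoid.isComLaw.Build (b.-tuple bool)
  zero_tuple (@xor_tuple b) (@xor_tupleA b) (@xor_tupleC b) (@xor0_tuple b).

Lemma xor_tupleK b (y : b.-tuple bool) : involutive ((@xor_tuple b)^~ y).
Proof. by move=> x; apply: eq_from_tnth => i; rewrite !tnth_mktuple -addbA addbb addbF. Qed.

(* A decoder exists as soon as the observations determine the wanted value:
   pick any input producing the observation. *)
Definition recover (A O B : Type) (a0 : A) (obs : A -> O) (f : A -> B) (o : O) : B :=
  f (epsilon (inhabits a0) (fun a => obs a = o)).

Lemma recoverE (A O B : Type) (a0 : A) (obs : A -> O) (f : A -> B) :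
  (forall a a', obs a' = obs a -> f a' = f a) ->
  forall a, recover a0 obs f (obs a) = f a.
Proof.
move=> determined a; apply: determined.
exact: (epsilon_spec (inhabits a0) (fun a' => obs a' = obs a) (ex_intro _ a erefl)).
Qed.

Section XorScheme.

Variables (N K F b : nat) (Label : finType) (valid : pred Label).
Variable missing : 'I_K -> Label -> bool.
Variables (Tx : eqType) (txs : 'I_K -> seq Tx).
Variable receives : 'I_K -> Tx -> 'I_K -> bool.
Variable intended : 'I_K -> Tx -> 'I_K -> Label.
Hypothesis F_gt0 : (0 < F)%N.
Hypothesis card_valid_le : (#|[set u | valid u]| <= F)%N.

Definition code (u : Label) : 'I_F := insubd (Ordinal F_gt0) (index u (enum valid)).

Lemma code_inj : {in valid &, injective code}.
Proof.
have index_lt u : valid u -> (index u (enum valid) < F)%N.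
  move=> vu; apply: leq_trans card_valid_le.
  by rewrite cardsE cardE index_mem mem_enum.
move=> u v vu vv /(congr1 val); rewrite /code !val_insubd !index_lt // => e.
by rewrite -(nth_index u (_ : u \in enum valid)) ?e ?nth_index ?mem_enum.
Qed.

(* Indices that code no valid label carry no packet of the scheme: every user
   caches them. *)
Definition missing_index k (j : 'I_F) := [exists u, [&& valid u, code u == j & missing k u]].

Lemma missing_index_code k u : valid u -> missing_index k (code u) = missing k u.
Proof.
move=> vu; apply/existsP/idP => [[v /and3P[vv /eqP cv mv]]|mu].
  by rewrite -(code_inj vv vu cv).
by exists u; rewrite vu eqxx.
Qed.

Lemma card_known_index k :
  #|[set j | ~~ missing_index k j]| = F - #|[set u | valid u && missing k u]|.
Proof.
have -> : [set j | ~~ missing_index k j] = ~: (code @: [set u | valid u && missing k u]).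
  apply/setP => j; rewrite !inE; congr negb; apply/existsP/imsetP.
    by case=> u /and3P[vu /eqP <- mu]; exists u; rewrite // inE vu.
  by case=> u; rewrite inE => /andP[vu mu] ->; exists u; rewrite vu eqxx.
rewrite cardsCs setCK card_ord card_in_imset // => u v.
by rewrite !inE => /andP[vu _] /andP[vv _]; apply: code_inj.
Qed.

Definition cache k : {set 'I_N * 'I_F} := [set x | ~~ missing_index k x.2].

Definition block d i β (W : library N F b) : b.-tuple bool :=
  \big[@xor_tuple b/zero_tuple]_(u | receives i β u) W (d u) (code (intended i β u)).

Definition encoder d i W := [seq block d i β W | β <- txs i].

Definition messages d k W i := if i == k then [::] else encoder d i (restrict (cache i) W).

Definition observed d k W := (restrict (cache k) W, messages d k W).

Definition decoder d k C ms j :=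
  recover (fun _ _ => zero_tuple) (observed d k) (fun W : library N F b => W (d k) j) (C, ms).

Hypothesis sender_knows : forall i β u, β \in txs i -> receives i β u ->
  valid (intended i β u) && ~~ missing i (intended i β u).

Definition delivers i β k p :=
  [/\ β \in txs i, i != k, receives i β k, intended i β k = p &
      forall u, u != k -> receives i β u -> ~~ missing k (intended i β u)].

Hypothesis missing_delivered : forall k p, valid p -> missing k p ->
  exists i β, delivers i β k p.

Lemma block_restrict d i β W : β \in txs i ->
  block d i β (restrict (cache i) W) = block d i β W.
Proof.
move=> βi; apply: eq_bigr => u ru; rewrite /restrict inE /=.
by case/andP: (sender_knows βi ru) => vu nm; rewrite missing_index_code // nm.
Qed.

(* The block carrying packet [p] to user [k] is [p] xor packets that [k] caches. *)
Lemma observed_determined d k (W W' : library N F b) j :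
  observed d k W' = observed d k W -> W' (d k) j = W (d k) j.
Proof.
case=> same_cache same_msgs.
have known n j' : ~~ missing_index k j' -> W' n j' = W n j'.
  by move=> nm; have := congr1 (fun V => V n j') same_cache; rewrite /restrict inE nm.
have [mj|] := boolP (missing_index k j); last exact: known.
case/existsP: mj => p /and3P[vp /eqP <- mp].
have [i [β [βi ik rik <- others]]] := missing_delivered vp mp.
have := congr1 (fun ms => ms i) same_msgs; rewrite /messages (negbTE ik).
move=> /eq_in_map /(_ β βi); rewrite !block_restrict // /block !(bigD1 k rik) /=.
rewrite (eq_bigr (fun u => W (d u) (code (intended i β u)))) => [|u /andP[ru uk]].
  by move/(canRL (xor_tupleK _)); rewrite xor_tupleK.
by apply: known; case/andP: (sender_knows βi ru) => vu _; rewrite missing_index_code // others.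
Qed.

Lemma decoderE d k W j : decoder d k (restrict (cache k) W) (messages d k W) j = W (d k) j.
Proof.
rewrite /decoder -[(_, _)]/(observed d k W); apply: recoverE => V V'.
exact: observed_determined.
Qed.

Local Open Scope ring_scope.

Theorem xor_scheme (M R : rat) : (0 < N)%N ->
  (forall k, ((N * (F - #|[set u | valid u && missing k u]|))%N%:R : rat) <= M * F%:R) ->
  R = (\sum_(k < K) size (txs k))%N%:R / F%:R ->
  D2D_scheme N K F b M R.
Proof.
move=> N_gt0 cache_le rateE.
exists cache, (fun _ k => size (txs k)), encoder, decoder; split.
- move=> k; have -> : cache k = setX [set: 'I_N] [set j | ~~ missing_index k j].
    by apply/setP => x; rewrite !inE.
  by rewrite cardsX cardsT card_ord card_known_index.
- by move=> d k W; rewrite size_map.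
- by move=> d k W j; apply: decoderE.
rewrite rateE; congr (_%:R / _); apply/eqP; rewrite eqn_leq; apply/andP; split.
  exact: (leq_bigmax_cond (F := fun _ => \sum_(k < K) size (txs k)) [ffun=> Ordinal N_gt0]).
by apply/bigmax_leqP.
Qed.

End XorScheme.

Definition third_pos (r1 r2 : 'I_3) : 'I_3 := inZp (3 - r1 - r2).
Definition mate_pos (r : 'I_3) (e : bool) : 'I_3 := inZp (r + 1 + e).
Definition mate_bit (r' r : 'I_3) : bool := r' == inZp (r + 2).

Ltac case_I3 r := case: r => [[|[|[|//]]] ?].

Lemma third_posP (r1 r2 r : 'I_3) : r1 != r2 ->
  [&& third_pos r1 r2 != r1, third_pos r1 r2 != r2, third_pos r2 r1 == third_pos r1 r2,
      third_pos r1 (third_pos r1 r2) == r2 & [|| r == r1, r == r2 | r == third_pos r1 r2]].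
Proof. by case_I3 r1; case_I3 r2; case_I3 r. Qed.

Lemma mate_posP (r : 'I_3) (e : bool) : (mate_pos r e != r) && (mate_bit (mate_pos r e) r == e).
Proof. by case_I3 r; case: e. Qed.

Lemma I3_nonzeroE (s : 'I_3) : s != ord0 -> s = inZp (1 + (s == 2 :> nat)).
Proof. by case_I3 s => // _; apply: val_inj. Qed.

Lemma I4E (s : 'I_4) : s = inZp (2 * (2 <= s) + odd s).
Proof. by apply: val_inj; case: s => [[|[|[|[|//]]]] ?]. Qed.

Lemma mul_bin3 n : 'C(n, 3) * 6 = n * (n - 1) * (n - 2).
Proof. by rewrite (_ : 6 = 3`!) // bin_ffact !ffactnS ffactn0 muln1 -!subn1 -subnDA mulnA. Qed.

Lemma mul_bin2 n : 'C(n, 2) * 2 = n * (n - 1).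
Proof. by rewrite (_ : 2 = 2`!) // bin_ffact !ffactnS ffactn0 muln1 -subn1. Qed.

Lemma card_set_sum (T : finType) (P : pred T) : #|[set u | P u]| = \sum_u (P u : nat).
Proof. by rewrite -sum1dep_card big_mkcond; apply: eq_bigr => u _; case: (P u). Qed.

Lemma sum_pair_triple (A B C : finType) (c : A -> B -> nat) :
  \sum_(a : A * B * C) c a.1.1 a.1.2 = #|C| * \sum_x \sum_y c x y.
Proof.
rewrite -(pair_bigA _ (fun x _ => c x.1 x.2)) (pair_bigA _ c) big_distrr /=.
by apply: eq_bigr => x _; rewrite sum_nat_const mulnC.
Qed.

Section Design.

Variable m : nat.
Local Notation K := (3 * m).

Lemma grp_subproof (k : 'I_K) : (k %/ 3 < m)%N.
Proof. by rewrite ltn_divLR // [(m * 3)%N]mulnC. Qed.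

Definition grp (k : 'I_K) : 'I_m := Ordinal (grp_subproof k).
Definition slot (k : 'I_K) : 'I_3 := inZp k.

Lemma user_subproof (g : 'I_m) (r : 'I_3) : (3 * g + r < K)%N.
Proof. by have := ltn_ord g; have := ltn_ord r; lia. Qed.

Definition user (g : 'I_m) (r : 'I_3) : 'I_K := Ordinal (user_subproof g r).

Lemma grp_user g r : grp (user g r) = g.
Proof. by apply: val_inj => /=; have := ltn_ord r; lia. Qed.

Lemma slot_user g r : slot (user g r) = r.
Proof. by apply: val_inj => /=; have := ltn_ord r; lia. Qed.

Lemma userK k : user (grp k) (slot k) = k.
Proof. by apply: val_inj => /=; lia. Qed.

Lemma eq_userE (k k' : 'I_K) : (k == k') = (grp k == grp k') && (slot k == slot k').
Proof.
apply/eqP/andP => [->|[/eqP eq_grp /eqP eq_slot]]; first by rewrite !eqxx.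
by rewrite -(userK k) -(userK k') eq_grp eq_slot.
Qed.

Lemma neq_of_grp (k k' : 'I_K) : grp k != grp k' -> k != k'.
Proof. by apply: contraNneq => ->. Qed.

Definition third (a c : 'I_K) := user (grp a) (third_pos (slot a) (slot c)).

Lemma grp_third a c : grp (third a c) = grp a.
Proof. exact: grp_user. Qed.

Section Triple.

Variables a c : 'I_K.
Hypotheses (grp_ac : grp a = grp c) (neq_ac : a != c).

Let slot_neq : slot a != slot c.
Proof. by move: neq_ac; rewrite eq_userE grp_ac eqxx. Qed.

Lemma third_neql : third a c != a.
Proof.
by case/and5P: (third_posP ord0 slot_neq) => ? *; rewrite eq_userE grp_user slot_user eqxx.
Qed.

Lemma third_neqr : third a c != c.
Proof.
case/and5P: (third_posP ord0 slot_neq) => _ ? *.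
by rewrite eq_userE grp_user slot_user grp_ac eqxx.
Qed.

Lemma thirdC : third c a = third a c.
Proof.
by case/and5P: (third_posP ord0 slot_neq) => _ _ /eqP eq_third *; rewrite /third eq_third grp_ac.
Qed.

Lemma third_thirdl : third (third a c) a = c.
Proof.
case/and5P: (third_posP ord0 slot_neq) => ne_a _ _ /eqP eq_c _.
case/and5P: (third_posP ord0 ne_a) => _ _ /eqP eq_third _ _.
by rewrite /third grp_user slot_user -eq_third eq_c grp_ac userK.
Qed.

Lemma third_thirdr : third a (third a c) = c.
Proof.
case/and5P: (third_posP ord0 slot_neq) => _ _ _ /eqP eq_c _.
by rewrite /third slot_user eq_c grp_ac userK.
Qed.

Lemma mem_group k : grp k = grp a -> [|| k == a, k == c | k == third a c].
Proof.
move=> grp_k; rewrite !eq_userE grp_k -grp_ac grp_user slot_user eqxx /=.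
by case/and5P: (third_posP (slot k) slot_neq).
Qed.

Lemma matesE k : (grp k == grp a) && (k != a) = (k == c) || (k == third a c).
Proof.
apply/idP/idP => [/andP[/eqP grp_k k_a]|/orP[] /eqP ->].
- case/or3P: (mem_group grp_k) => [/eqP k_a'|->|->]; rewrite ?orbT //.
  by rewrite k_a' eqxx in k_a.
- by rewrite grp_ac eqxx eq_sym neq_ac.
- by rewrite grp_third eqxx third_neql.
Qed.

End Triple.

(* In a triple label (G, f, s), f is ord0 off G, so (G, f) encodes the three
   users f g, g in G, one in each group of G. *)
Definition pair_label := ('I_K * 'I_K * 'I_3)%type.
Definition triple_label := ({set 'I_m} * {ffun 'I_m -> 'I_3} * 'I_4)%type.
Definition label := (pair_label + triple_label)%type.

Definition valid_label (p : label) : bool :=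
  match p with
  | inl a => grp a.1.1 != grp a.1.2
  | inr a => (#|a.1.1| == 3) && (a.1.2 \in pffun_on ord0 a.1.1 predT)
  end.

Definition missing_label (k : 'I_K) (p : label) : bool :=
  match p with
  | inl a => (grp k == grp a.1.1) && (k != a.1.1) || (k == a.1.2)
  | inr a => (grp k \in a.1.1) && (a.1.2 (grp k) == slot k)
  end.

Definition tx := ('I_3 + 'I_K * 'I_K)%type.

Definition cross (i x y : 'I_K) := [&& grp x == grp i, x != i & grp y != grp i].

Definition txs (i : 'I_K) : seq tx :=
  [seq inl s | s <- enum 'I_3] ++
  [seq inr xy | xy <- enum [pred xy : 'I_K * 'I_K | cross i xy.1 xy.2]].

Definition receives (i : 'I_K) (β : tx) (u : 'I_K) : bool :=
  match β with
  | inl _ => grp u != grp i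
  | inr xy => [&& u != xy.1, u != xy.2 & u != i]
  end.

Definition triple_of (u x y : 'I_K) : {set 'I_m} * {ffun 'I_m -> 'I_3} :=
  ([set grp u; grp x; grp y],
   [ffun g => if g == grp u then slot u else if g == grp x then slot x
              else if g == grp y then slot y else ord0]).

(* The last component of a label sent in a block inr (x, y) records which of
   the blocks serving the same three users carries it: whether x or y has the
   smaller group, and which mate of x sends the block. *)
Definition intended (i : 'I_K) (β : tx) (u : 'I_K) : label :=
  match β with
  | inl s => inl (i, u, s)
  | inr xy =>
    if grp u == grp xy.1 then inl (i, xy.2, ord0)
    else if grp u == grp xy.2 then
      inl (third u xy.2, xy.1, inZp (1 + mate_bit (slot i) (slot xy.1)))
    else inr (triple_of u xy.1 xy.2,
              inZp (2 * (grp xy.1 < grp xy.2) + mate_bit (slot i) (slot xy.1)))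
  end.

Lemma mem_txs_inl i s : inl s \in txs i.
Proof. by rewrite mem_cat; apply/orP; left; apply/mapP; exists s; rewrite ?mem_enum. Qed.

Lemma mem_txs_inr i x y : (inr (x, y) \in txs i) = cross i x y.
Proof.
rewrite mem_cat; apply/orP/idP => [[/mapP[? _ //]|/mapP[[x' y'] + [-> ->]]]|c].
  by rewrite mem_enum.
by right; apply/mapP; exists (x, y); rewrite // mem_enum.
Qed.

Section TripleOf.

Variables u x y : 'I_K.
Hypotheses (ux : grp u != grp x) (uy : grp u != grp y) (xy : grp x != grp y).

Lemma card_triple_of : #|(triple_of u x y).1| = 3.
Proof.
rewrite /= (_ : [set _; _; _] = grp u |: [set grp x; grp y]).
  by rewrite cardsU1 cards2 !inE xy negb_or ux uy.
by apply/setP => g; rewrite !inE orbA.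
Qed.

Lemma valid_triple_of s : valid_label (inr (triple_of u x y, s)).
Proof.
rewrite /valid_label card_triple_of eqxx /=.
apply/pffun_onP; split=> // ; apply/subsetP => g; rewrite !inE ffunE.
by case: (g == grp u) => //; case: (g == grp x) => //; case: (g == grp y); rewrite ?eqxx.
Qed.

Lemma missing_triple_of k s :
  missing_label k (inr (triple_of u x y, s)) = [|| k == u, k == x | k == y].
Proof.
rewrite /missing_label /= !inE ffunE !eq_userE.
have [->|ku] /= := eqVneq (grp k) (grp u).
  by rewrite (negbTE ux) (negbTE uy) /= orbF eq_sym.
have [->|kx] /= := eqVneq (grp k) (grp x); first by rewrite (negbTE xy) /= orbF eq_sym.
by case: (grp k == grp y) => //=; rewrite eq_sym.
Qed.

End TripleOf.

Lemma triple_ofE G f k x y : valid_label (inr (G, f, ord0)) ->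
  grp k != grp x -> grp k != grp y -> grp x != grp y ->
  grp k \in G -> grp x \in G -> grp y \in G ->
  f (grp k) = slot k -> f (grp x) = slot x -> f (grp y) = slot y -> triple_of k x y = (G, f).
Proof.
case/andP => /eqP card_G /pffun_onP[supp _] kx ky xy kG xG yG fk fx fy.
have grpsE : [set grp k; grp x; grp y] = G.
  apply/eqP; rewrite eqEcard card_G (card_triple_of kx ky xy) leqnn andbT.
  by apply/subsetP => g; rewrite !inE -orbA; case/or3P => /eqP ->.
rewrite /triple_of grpsE; congr pair; apply/ffunP => g; rewrite ffunE.
case: ifP => [/eqP ->//|gk]; case: ifP => [/eqP ->//|gx]; case: ifP => [/eqP ->//|gy].
have gG : g \notin G by rewrite -grpsE !inE gk gx gy.
by apply/eqP; apply: contraNT gG => fg; apply: (subsetP supp); rewrite inE eq_sym.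
Qed.

Lemma intended_cross i x y u : cross i x y -> receives i (inr (x, y)) u ->
  valid_label (intended i (inr (x, y)) u) /\
  forall k, missing_label k (intended i (inr (x, y)) u) = [|| k == u, k == x | k == y].
Proof.
case/and3P => /eqP grp_xi xi yi /and3P[ux uy ui]; rewrite /intended /=.
have grp_ix := esym grp_xi; have ix : i != x by rewrite eq_sym.
case: ifP => [/eqP grp_ux|/negbT grp_ux].
  split=> [|k]; first by rewrite /valid_label /= eq_sym.
  have /or3P[/eqP u_i|/eqP u_x|/eqP u_t] := mem_group grp_ix ix (etrans grp_ux grp_xi).
  - by rewrite u_i eqxx in ui.
  - by rewrite u_x eqxx in ux.
  by rewrite /missing_label /= (matesE grp_ix ix) -u_t (orbC (k == x)) -orbA.
case: ifP => [/eqP grp_uy|/negbT grp_uy].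
  have grp_tu := grp_third u y.
  split=> [|k]; first by rewrite /valid_label /= grp_tu grp_ux.
  rewrite /missing_label /= (matesE grp_tu (third_neql grp_uy uy)) third_thirdl //.
  by rewrite -orbA (orbC (k == y)).
have grp_xy : grp x != grp y by rewrite grp_xi eq_sym.
by split=> [|k]; [apply: valid_triple_of | apply: missing_triple_of].
Qed.

Lemma sender_knows i β u : β \in txs i -> receives i β u ->
  valid_label (intended i β u) && ~~ missing_label i (intended i β u).
Proof.
case: β => [s|[x y]] βi /= ru.
  by rewrite /valid_label /missing_label /= eq_sym ru !eqxx /=; apply: contraNneq ru => ->.
rewrite mem_txs_inr in βi; have [-> ->] := intended_cross βi ru.
case/and3P: βi => _ xi yi; case/and3P: ru => _ _ ui.
by rewrite ![i == _]eq_sym (negbTE ui) (negbTE xi) /=; apply: contraNneq yi => ->.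
Qed.

Local Notation delivers := (delivers missing_label txs receives intended).

Lemma direct_delivers z v s : grp z != grp v -> delivers z (inl s) v (inl (z, v, s)).
Proof.
move=> zv; split=> //; first exact: mem_txs_inl.
- by apply: contraNneq zv => ->.
- by rewrite /receives eq_sym.
move=> u uv _; rewrite /missing_label /= [grp v == _]eq_sym (negbTE zv) /=.
by rewrite eq_sym.
Qed.

Lemma cross_delivers i x y k : cross i x y -> receives i (inr (x, y)) k ->
  delivers i (inr (x, y)) k (intended i (inr (x, y)) k).
Proof.
move=> c rk; case/and3P: (rk) => kx ky ki.
split=> //; rewrite ?mem_txs_inr 1?eq_sym //.
move=> u uk ru; have [_ ->] := intended_cross c ru.
by rewrite eq_sym (negbTE uk) (negbTE kx) (negbTE ky).
Qed.

Section MateOfLabel.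

Variables z k v : 'I_K.
Hypotheses (grp_kz : grp k = grp z) (kz : k != z) (grp_vz : grp v != grp z).

Let grp_zk := esym grp_kz.
Let zk : z != k. Proof. by rewrite eq_sym. Qed.
Let grp_x : grp (third z k) = grp k. Proof. by rewrite grp_third grp_kz. Qed.
Let kv : k != v. Proof. by apply: contraNneq grp_vz => <-; rewrite grp_kz. Qed.
Let kx : k != third z k. Proof. by rewrite eq_sym third_neqr. Qed.

Lemma mate_delivers0 : delivers z (inr (third z k, v)) k (inl (z, v, ord0)).
Proof.
have c : cross z (third z k) v by rewrite /cross grp_third // eqxx third_neql.
have r : receives z (inr (third z k, v)) k by rewrite /receives /= kx kv.
suff <- : intended z (inr (third z k, v)) k = inl (z, v, ord0) by apply: cross_delivers.
by rewrite /intended /= grp_x eqxx.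
Qed.

Lemma mate_delivers (s : 'I_3) : s != ord0 ->
  delivers (user (grp v) (mate_pos (slot v) (s == 2 :> nat))) (inr (v, third z k)) k
           (inl (z, v, s)).
Proof.
move=> s0; set i := user _ _.
have /andP[i_slot /eqP i_bit] := mate_posP (slot v) (s == 2 :> nat).
have grp_i : grp i = grp v by rewrite grp_user.
have vi : v != i by rewrite eq_userE grp_i eqxx slot_user eq_sym.
have c : cross i v (third z k) by rewrite /cross grp_i eqxx vi grp_x grp_kz eq_sym.
have r : receives i (inr (v, third z k)) k.
  by rewrite /receives /= kv kx; apply: contraNneq grp_vz => ki; rewrite -grp_i -ki grp_kz.
suff <- : intended i (inr (v, third z k)) k = inl (z, v, s) by apply: cross_delivers.
rewrite /intended /= grp_kz eq_sym (negbTE grp_vz) grp_x grp_kz eqxx.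
by rewrite (thirdC grp_kz kz) third_thirdr // slot_user i_bit -I3_nonzeroE.
Qed.

End MateOfLabel.

Lemma triple_delivers k x y (s : 'I_4) :
  grp k != grp x -> grp k != grp y -> grp x != grp y -> (grp x < grp y) = (2 <= s) ->
  delivers (user (grp x) (mate_pos (slot x) (odd s))) (inr (x, y)) k
           (inr (triple_of k x y, s)).
Proof.
move=> kx ky xy order_xy; set i := user _ _.
have /andP[i_slot /eqP i_bit] := mate_posP (slot x) (odd s).
have grp_i : grp i = grp x by rewrite grp_user.
have xi : x != i by rewrite eq_userE grp_i eqxx slot_user eq_sym.
have c : cross i x y by rewrite /cross grp_i eqxx xi eq_sym.
have r : receives i (inr (x, y)) k.
  by rewrite /receives /= !neq_of_grp ?grp_i.
suff <- : intended i (inr (x, y)) k = inr (triple_of k x y, s) by apply: cross_delivers.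
by rewrite /intended /= (negbTE kx) (negbTE ky) slot_user i_bit order_xy -I4E.
Qed.

Lemma pair_label_delivered k (a : pair_label) :
  valid_label (inl a) -> missing_label k (inl a) -> exists i β, delivers i β k (inl a).
Proof.
case: a => [[z v] s]; rewrite /valid_label /missing_label /= => grp_zv.
case/orP => [/andP[/eqP grp_kz kz]|/eqP ->]; last first.
  by exists z, (inl s); apply: direct_delivers.
have grp_vz : grp v != grp z by rewrite eq_sym.
have [-> | s0] := eqVneq s ord0.
  by exists z, (inr (third z k, v)); apply: mate_delivers0.
by eexists; exists (inr (v, third z k)); apply: mate_delivers.
Qed.

Lemma triple_label_delivered k (a : triple_label) :
  valid_label (inr a) -> missing_label k (inr a) -> exists i β, delivers i β k (inr a).
Proof.
case: a => [[G f] s] valid_a; case/andP: (valid_a) => /eqP card_G _.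
rewrite /missing_label /= => /andP[kG /eqP fk].
have : #|G :\ grp k| == 2 by move: card_G; rewrite (cardsD1 (grp k)) kG add1n => -[->].
case/cards2P => g1 [g2 [g12 G_k]].
have : (g1 \in G :\ grp k) && (g2 \in G :\ grp k) by rewrite G_k !inE !eqxx orbT.
rewrite !inE => /andP[/andP[g1k g1G] /andP[g2k g2G]].
have delivered g g' : g \in G -> g' \in G -> g != grp k -> g' != grp k -> g != g' ->
    (g < g') = (2 <= s) -> exists i β, delivers i β k (inr (G, f, s)).
  move=> gG g'G gk g'k gg' order_gg'.
  have [kx ky xy] : [/\ grp k != grp (user g (f g)), grp k != grp (user g' (f g'))
                     & grp (user g (f g)) != grp (user g' (f g'))].
    by rewrite !grp_user ![grp k == _]eq_sym.
  eexists; exists (inr (user g (f g), user g' (f g'))).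
  rewrite -(triple_ofE valid_a kx ky xy kG) ?grp_user ?slot_user //.
  by apply: (triple_delivers kx ky xy); rewrite !grp_user.
have [lt12|lt21|/val_inj eq12] := ltngtP g1 g2; last by rewrite eq12 eqxx in g12.
- case hs: (2 <= s); first by apply: (delivered g1 g2); rewrite // lt12.
  by apply: (delivered g2 g1); rewrite // 1?eq_sym // ltnNge ltnW.
- case hs: (2 <= s); first by apply: (delivered g2 g1); rewrite // 1?eq_sym // lt21.
  by apply: (delivered g1 g2); rewrite // ltnNge ltnW.
Qed.

Lemma label_delivered k p : valid_label p -> missing_label k p ->
  exists i β, delivers i β k p.
Proof. by case: p => [a|a]; [apply: pair_label_delivered | apply: triple_label_delivered]. Qed.

Lemma card_group g : #|[set v : 'I_K | grp v == g]| = 3.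
Proof.
have user_inj : injective (user g) by move=> r r' e; rewrite -(slot_user g r) e slot_user.
suff -> : [set v : 'I_K | grp v == g] = user g @: [set: 'I_3].
  by rewrite card_imset // cardsT card_ord.
apply/setP => v; rewrite !inE; apply/eqP/imsetP => [<-|[r _ ->]]; last exact: grp_user.
by exists (slot v); rewrite ?inE ?userK.
Qed.

Lemma card_other_groups g : #|[set v : 'I_K | grp v != g]| = 3 * m - 3.
Proof.
have := cardsC [set v : 'I_K | grp v == g]; rewrite card_group card_ord.
have -> : ~: [set v : 'I_K | grp v == g] = [set v | grp v != g] by apply/setP => v; rewrite !inE.
by move=> /(congr1 (subn^~ 3)); rewrite addKn.
Qed.

Lemma card_mates i : #|[set x : 'I_K | (grp x == grp i) && (x != i)]| = 2.
Proof.
have := cardsD1 i [set v : 'I_K | grp v == grp i]; rewrite card_group inE eqxx.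
have -> : [set v : 'I_K | grp v == grp i] :\ i = [set x | (grp x == grp i) && (x != i)].
  by apply/setP => v; rewrite !inE andbC.
by move=> [].
Qed.

Lemma size_txs i : size (txs i) = 3 * (2 * m - 1).
Proof.
rewrite /txs size_cat !size_map -enumT size_enum_ord -cardE.
rewrite (@eq_card _ _ (setX [set x : 'I_K | (grp x == grp i) && (x != i)]
                            [set v : 'I_K | grp v != grp i])); last first.
  by move=> -[x y]; rewrite !inE /cross andbA.
by rewrite cardsX card_mates card_other_groups; have := ltn_ord (grp i); lia.
Qed.

Lemma sum_valid_pairs :
  \sum_(a : pair_label) (valid_label (inl a) : nat) = 3 * (3 * m * (3 * m - 3)).
Proof.
rewrite (sum_pair_triple _ (fun z v => (grp z != grp v : nat))) card_ord; congr (_ * _).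
rewrite -[X in _ = X * _]card_ord -sum_nat_const; apply: eq_bigr => z _.
by rewrite -(card_other_groups (grp z)) card_set_sum; apply: eq_bigr => v _; rewrite eq_sym.
Qed.

Lemma card_pffun_on_I3 (G : {set 'I_m}) :
  #|[set f : {ffun 'I_m -> 'I_3} | f \in pffun_on ord0 G predT]| = 3 ^ #|G|.
Proof.
rewrite (@eq_card _ _ (pffun_on ord0 G predT)) => [|f]; last by rewrite inE.
by rewrite card_pffun_on (@eq_card _ _ 'I_3) ?card_ord.
Qed.

Lemma sum_valid_triples :
  \sum_(a : triple_label) (valid_label (inr a) : nat) = 4 * (27 * 'C(m, 3)).
Proof.
rewrite (sum_pair_triple _ (fun (G : {set 'I_m}) (f : {ffun 'I_m -> 'I_3}) =>
          ((#|G| == 3) && (f \in pffun_on ord0 G predT) : nat))) card_ord.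
congr (_ * _); rewrite -[m in RHS]card_ord -card_draws card_set_sum big_distrr /=.
apply: eq_bigr => G _; have [card_G|] /= := eqVneq #|G| 3; last by rewrite big1 // muln0.
by rewrite -card_set_sum card_pffun_on_I3 card_G muln1.
Qed.

Lemma sum_missing_pairs k :
  \sum_(a : pair_label) (valid_label (inl a) && missing_label k (inl a) : nat) =
  3 * (3 * (3 * m - 3)).
Proof.
rewrite (sum_pair_triple _ (fun z v => ((grp z != grp v) &&
           ((grp k == grp z) && (k != z) || (k == v)) : nat))) card_ord; congr (_ * _).
transitivity (\sum_z (((grp z == grp k) && (z != k) : nat) * (3 * m - 3) + (grp z != grp k : nat))).
  apply: eq_bigr => z _; have [grp_zk|grp_zk] := eqVneq (grp z) (grp k).
    have [->|zk] := eqVneq z k.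
      by rewrite big1 // => v _; have [->|] := eqVneq k v; rewrite /= ?eqxx ?andbF.
    rewrite /= mul1n addn0 -(card_other_groups (grp k)) card_set_sum.
    by apply: eq_bigr => v _; rewrite andbT grp_zk eq_sym.
  rewrite /= (eq_bigr (fun v => (v == k : nat))) => [|v _].
    by rewrite -card_set_sum (@eq_card _ _ [set k]) ?cards1 // => v; rewrite !inE.
  by have [->|] := eqVneq v k; rewrite ?grp_zk ?andbF // eqxx.
rewrite big_split /= -big_distrl /= -!card_set_sum card_other_groups.
by rewrite (@eq_card _ _ [set x : 'I_K | (grp x == grp k) && (x != k)]) ?card_mates //; lia.
Qed.

Lemma card_pffun_on_fixed (G : {set 'I_m}) g r : #|G| = 3 -> g \in G ->
  #|[set f : {ffun 'I_m -> 'I_3} | (f \in pffun_on ord0 G predT) && (f g == r)]| = 9.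
Proof.
move=> card_G gG.
rewrite (@eq_card _ _ (pfamily ord0 G (fun x => if x == g then pred1 r else predT))).
  rewrite card_pfamily foldrE big_map big_enum /= (bigD1 g) //= eqxx card1 mul1n.
  rewrite (eq_bigr (fun _ => 3)) => [|x /andP[_ /negbTE ->]]; last first.
    by rewrite (@eq_card _ _ 'I_3) ?card_ord.
  rewrite prod_nat_const (@eq_card _ _ [predD1 G & g]) => [|x]; last by rewrite !inE andbC.
  by move: card_G; rewrite (cardD1 g) gG add1n => -[->].
move=> f; rewrite inE; apply/andP/pfamilyP => [[/pffun_onP[supp _] /eqP fg]|[supp f_in]].
  by split=> // x xG; case: ifP => [/eqP ->|]; rewrite ?inE ?fg.
by split; [apply/pffun_onP | have := f_in g gG; rewrite eqxx inE].
Qed.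

Lemma card_3sets_mem (g : 'I_m) :
  #|[set G : {set 'I_m} | (#|G| == 3) && (g \in G)]| = 'C(m.-1, 2).
Proof.
have card_without : #|[set G : {set 'I_m} | (#|G| == 3) && (g \notin G)]| = 'C(m.-1, 3).
  rewrite (@eq_card _ _ [set A : {set 'I_m} | A \subset [set~ g] & #|A| == 3]).
    by rewrite cards_draws cardsC1 card_ord.
  by move=> A; rewrite !inE subsetC sub1set inE andbC.
have split_mem : #|[set G : {set 'I_m} | #|G| == 3]| =
    #|[set G : {set 'I_m} | (#|G| == 3) && (g \in G)]| + 'C(m.-1, 3).
  rewrite -card_without !card_set_sum -big_split /=; apply: eq_bigr => G _.
  by case: (#|G| == 3); case: (g \in G).
have pascal : 'C(m, 3) = 'C(m.-1, 3) + 'C(m.-1, 2).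
  by rewrite -binS prednK //; apply: leq_ltn_trans (ltn_ord g).
move: split_mem; rewrite card_draws card_ord pascal; lia.
Qed.

Lemma sum_missing_triples k :
  \sum_(a : triple_label) (valid_label (inr a) && missing_label k (inr a) : nat) =
  4 * (9 * 'C(m.-1, 2)).
Proof.
rewrite (sum_pair_triple _ (fun (G : {set 'I_m}) (f : {ffun 'I_m -> 'I_3}) =>
          (((#|G| == 3) && (f \in pffun_on ord0 G predT)) &&
          ((grp k \in G) && (f (grp k) == slot k)) : nat))) card_ord; congr (_ * _).
rewrite -(card_3sets_mem (grp k)) card_set_sum big_distrr /=; apply: eq_bigr => G _.
have [card_G|] /= := eqVneq #|G| 3; last by rewrite big1 // muln0.
case kG: (grp k \in G) => /=; last by rewrite big1 // => f _; rewrite andbF.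
by rewrite muln1 -(card_pffun_on_fixed (slot k) card_G kG) card_set_sum.
Qed.

Lemma card_set_label (P : pred label) :
  #|[set p | P p]| = \sum_a (P (inl a) : nat) + \sum_a (P (inr a) : nat).
Proof. by rewrite card_set_sum big_sumType. Qed.

Lemma card_valid_labels : #|[set p | valid_label p]| = 9 * m * (m - 1) * (2 * m - 1).
Proof.
rewrite card_set_label sum_valid_pairs sum_valid_triples.
by have := mul_bin3 m; nia.
Qed.

Lemma card_missing_labels k :
  #|[set p | valid_label p && missing_label k p]| = 9 * (m - 1) * (2 * m - 1).
Proof.
rewrite card_set_label sum_missing_pairs sum_missing_triples.
by have := mul_bin2 m.-1; have := ltn_ord (grp k); nia.
Qed.

End Design.

Local Open Scope ring_scope.

Theorem mainTheorem7 (m N : nat) (M : rat) :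
  (3 <= m)%N -> (1 <= N)%N -> 0 < M -> M <= N%:R ->
  (3 * m)%N%:R * M / N%:R = (3 * m - 3)%N%:R ->
  achievable_with_subpack N (3 * m) M (N%:R / M - 1)
    (9 * m * (m - 1) * (2 * m - 1))%N.
Proof.
move=> m_ge3 N_gt0 _ _ tE.
have [x x_gt0 mE] : exists2 x, (0 < x)%N & m = (x + 1)%N by exists (m - 1)%N; lia.
have [m1E m2E] : (m - 1 = x)%N /\ (2 * m - 1 = 2 * x + 1)%N by rewrite mE; lia.
have [x_pos N_pos] : 0 < x%:R :> rat /\ 0 < N%:R :> rat by rewrite !ltr0n.
have ME : M = x%:R * N%:R / (x%:R + 1).
  have -> : M = 3 * (x%:R + 1) * M / N%:R * N%:R / (3 * (x%:R + 1)).
    by field; rewrite !lt0r_neq0 //; lra.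
  move: tE; rewrite mE (_ : (3 * (x + 1) - 3 = 3 * x)%N) ?natrM ?natrD; last by lia.
  by move=> ->; field; rewrite !lt0r_neq0 //; lra.
rewrite m1E m2E; set F := (9 * m * x * (2 * x + 1))%N.
have F_gt0 : (0 < F)%N by rewrite !muln_gt0 x_gt0 mE !addn1.
have card_le : (#|[set p | @valid_label m p]| <= F)%N by rewrite card_valid_labels m1E m2E.
split=> // b _; apply: (xor_scheme b F_gt0 card_le (@sender_knows m) (@label_delivered m)) => //.
- move=> k; rewrite card_missing_labels m1E m2E ME le_eqVlt; apply/predU1P; left.
  have -> : (F = 9 * x * x * (2 * x + 1) + 9 * x * (2 * x + 1))%N by rewrite /F mE; ring.
  by rewrite addnK !natrM !natrD; field; rewrite !lt0r_neq0 //; lra.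
- rewrite (eq_bigr (fun=> (3 * (2 * x + 1))%N)) => [|k _]; last by rewrite size_txs m2E.
  by rewrite sum_nat_const card_ord /F mE ME !natrM !natrD; field; rewrite !lt0r_neq0 //; lra.
Qed.
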